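(* Let $X\sim\mathbb P_X$ on $\mathcal X$, $\mathcal Y$ finite, $r:\mathcal X\to\mathbb R^{\mathcal Y}$ and $g:\mathcal X\to\mathbb R^K$. Suppose that for every $a\in\mathbb R^{\mathcal Y}\setminus\{0\}$ and every $b\in\mathbb R^K$, $\Pr\big(a^\top r(X)+b^\top g(X)=0\big)=0$ (i.e., the push-forward of $\mathbb P_X$ under $x\mapsto(r(x),g(x))\in\mathbb R^{\mathcal Y\times K}$ gives no mass to any strict linear subspace with a nonzero component in the $\mathbb R^{\mathcal Y}$ coordinates). Then for every $w:\mathcal Y\times[K]\to\mathbb R$, the set $\operatorname{argmin}_{y\in\mathcal Y}\big(r(X)_y-\sum_{k\in[K]}g(X)_k w(y,k)\big)$ has exactly one element $\mathbb P_X$-almost surely. *)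

From HB Require Import structures.
From mathcomp Require Import all_boot all_order all_algebra.
From mathcomp Require Import all_classical all_reals all_analysis.
Set Implicit Arguments. Unset Strict Implicit. Unset Printing Implicit Defensive.
Import Order.TTheory GRing.Theory Num.Theory.
Local Open Scope ring_scope.

Definition score (T : Type) (R : realType) (Y : finType) (K : nat)
  (r : T -> Y -> R) (g : T -> 'I_K -> R) (w : Y -> 'I_K -> R) (x : T) (y : Y) : R :=
  r x y - \sum_(k < K) g x k * w y k.

Definition argmin_set (T : Type) (R : realType) (Y : finType) (K : nat)
  (r : T -> Y -> R) (g : T -> 'I_K -> R) (w : Y -> 'I_K -> R) (x : T) : {set Y} :=
  [set y : Y | [forall y' : Y, score r g w x y <= score r g w x y']].

From HB Require Import structures.
From mathcomp Require Import all_boot all_order all_algebra.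
From mathcomp Require Import all_classical all_reals all_analysis.
From mathcomp Require Import ring.
Set Implicit Arguments. Unset Strict Implicit. Unset Printing Implicit Defensive.
Import Order.TTheory GRing.Theory Num.Theory.
Local Open Scope ring_scope.
Local Open Scope classical_set_scope.

(* Labels y != y' tie at x exactly when x lies in the zero set of the linear
   form a^T r(x) + b^T g(x) with a = e_y - e_y' and b = w(y', .) - w(y, .);
   since a != 0 this set is null.  Off the finite union of these null sets the
   score is injective on Y, so its minimiser is unique. *)

Lemma sum_deltaB (R : pzRingType) (Y : finType) (f : Y -> R) (y y' : Y) :
  \sum_z ((z == y)%:R - (z == y')%:R) * f z = f y - f y'.
Proof.
have sum_delta (u : Y) : \sum_z (z == u)%:R * f z = f u.
  under eq_bigr => z _ do rewrite mulr_natl mulrb.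
  by rewrite -big_mkcond big_pred1_eq.
by under eq_bigr => z _ do rewrite mulrBl; rewrite sumrB !sum_delta.
Qed.

Lemma card_argmin_inj (disp : Order.disp_t) (O : orderType disp) (Y : finType)
    (f : Y -> O) :
  (0 < #|Y|)%N -> injective f ->
  #|[set y | [forall y', (f y <= f y')%O]]%SET| = 1%N.
Proof.
move=> /card_gt0P[y0 _] f_inj.
have [ym _ ym_min] := arg_minP f (isT : xpredT y0).
apply/eqP/cards1P; exists ym; apply/setP => z; rewrite !inE.
apply/forallP/eqP => [z_min|-> y]; last exact: ym_min.
by apply: f_inj; apply/eqP; rewrite eq_le z_min ym_min.
Qed.

Lemma score_subE (T : Type) (R : realType) (Y : finType) (K : nat)
    (r : T -> Y -> R) (g : T -> 'I_K -> R) (w : Y -> 'I_K -> R) x y y' :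
  score r g w x y - score r g w x y' =
  \sum_z ((z == y)%:R - (z == y')%:R) * r x z
  + \sum_(k < K) (w y' k - w y k) * g x k.
Proof.
rewrite sum_deltaB /score.
under [X in _ = _ + X]eq_bigr => k _ do rewrite mulrBl [_ * g x k]mulrC
  [w y k * _]mulrC.
by rewrite sumrB; ring.
Qed.

Section Ties.
Variables (d : measure_display) (T : measurableType d) (R : realType).
Variables (mu : {measure set T -> \bar R}) (Y : finType) (K : nat).
Variables (r : T -> Y -> R) (g : T -> 'I_K -> R).
Hypothesis mr : forall y, measurable_fun setT (fun x => r x y).
Hypothesis mg : forall k, measurable_fun setT (fun x => g x k).
Hypothesis hgen : forall (a : Y -> R) (b : 'I_K -> R), (exists y, a y != 0) ->
  mu [set x | \sum_y a y * r x y + \sum_(k < K) b k * g x k = 0] = 0%E.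

Lemma measurable_linear_form_eq0 (a : Y -> R) (b : 'I_K -> R) :
  measurable [set x | \sum_y a y * r x y + \sum_(k < K) b k * g x k = 0].
Proof.
have mf : measurable_fun setT
    (fun x => \sum_y a y * r x y + \sum_(k < K) b k * g x k).
  apply: measurable_realfun.measurable_funD; apply: measurable_sum => i;
    exact: measurable_realfun.measurable_funM.
by rewrite -[X in measurable X]setTI; exact: mf (measurable_set1 0).
Qed.

Lemma ae_score_neq (w : Y -> 'I_K -> R) (y y' : Y) : y != y' ->
  {ae mu, forall x, score r g w x y != score r g w x y'}.
Proof.
move=> yy'.
exists [set x | \sum_z ((z == y)%:R - (z == y')%:R) * r x z
                + \sum_(k < K) (w y' k - w y k) * g x k = 0]; split.
- exact: measurable_linear_form_eq0.
- by apply: hgen; exists y; rewrite eqxx (negbTE yy') subr0 oner_neq0.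
- move=> x /= /negP; rewrite negbK => /eqP tie.
  by rewrite -score_subE tie subrr.
Qed.

End Ties.

Theorem lemma1 (d : measure_display) (T : measurableType d) (R : realType)
  (P : probability T R) (Y : finType) (K : nat)
  (r : T -> Y -> R) (g : T -> 'I_K -> R)
  (hY : (0 < #|Y|)%N)
  (mr : forall y : Y, measurable_fun setT (fun x => r x y))
  (mg : forall k : 'I_K, measurable_fun setT (fun x => g x k))
  (hgen : forall (a : Y -> R) (b : 'I_K -> R), (exists y, a y != 0) ->
     P [set x | \sum_(y : Y) a y * r x y + \sum_(k < K) b k * g x k = 0] = 0%E) :
  forall w : Y -> 'I_K -> R,
    {ae P, forall x, #|argmin_set r g w x| = 1%N}.
Proof.
move=> w.
have no_ties : {ae P, forall x, forall p : Y * Y,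
    p.1 != p.2 -> score r g w x p.1 != score r g w x p.2}.
  apply: filter_forall => -[y y'] /=.
  have [<-|yy'] := eqVneq y y'; first by apply: aeW => x; rewrite eqxx.
  by apply: filterS (ae_score_neq mr mg hgen w yy') => x neq _.
apply: filterS no_ties => x no_tie.
apply: card_argmin_inj => // y y' /eqP; apply: contraTeq.
exact: no_tie (y, y').
Qed.
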